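(* Let $\mathcal C\subseteq(S^2)^n$ be a vector trifferent code with $|\mathcal C|\ge2$. Then \[ \binom{|\mathcal C|}{2}\cdot \mathbb E_{\{x,y\}}\bigl[2^{A(x,y)}\bigr]\le 3^n, \] where the expectation is over a uniformly random $2$-element subset $\{x,y\}$ of $\mathcal C$ and $A(x,y)=|\{i\in[n]:\langle x_i,y_i\rangle\neq0\}|$. Equivalently $\sum_{\{x,y\}\subseteq\mathcal C,\,x\ne y}2^{A(x,y)}\le 3^n$.
   Context: $S^2$ is the unit sphere in $\mathbb R^3$. A vector trifferent code of block length $n$ is a subset $\mathcal C\subseteq(S^2)^n$ such that for any three distinct $x,y,z\in\mathcal C$ there is $i\in[n]$ with $x_i,y_i,z_i$ mutually orthogonal. *)

From HB Require Import structures.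
From mathcomp Require Import all_boot all_order all_algebra.
From mathcomp Require Import reals.
Set Implicit Arguments. Unset Strict Implicit. Unset Printing Implicit Defensive.
Import Order.TTheory GRing.Theory Num.Theory.
Local Open Scope ring_scope.

Definition dot3 (R : realType) (u v : 'rV[R]_3) : R :=
  \sum_(k < 3) u 0 k * v 0 k.

Definition on_S2 (R : realType) (u : 'rV[R]_3) : Prop := dot3 u u = 1.

Definition word (R : realType) (n : nat) := {ffun 'I_n -> 'rV[R]_3}.

Definition mutually_orth (R : realType) (u v w : 'rV[R]_3) : Prop :=
  dot3 u v = 0 /\ dot3 v w = 0 /\ dot3 u w = 0.

Definition vector_trifferent (R : realType) (n : nat) (C : seq (word R n)) : Prop :=
  uniq C /\
  (forall x, x \in C -> forall i, on_S2 (x i)) /\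
  (forall x y z, x \in C -> y \in C -> z \in C ->
     x != y -> y != z -> x != z ->
     exists i : 'I_n, mutually_orth (x i) (y i) (z i)).

Definition agree_cnt (R : realType) (n : nat) (x y : word R n) : nat :=
  #|[set i : 'I_n | dot3 (x i) (y i) != 0]|.

From HB Require Import structures.
From mathcomp Require Import all_boot all_order all_algebra.
From mathcomp Require Import reals.
From mathcomp Require Import mxtens lra zify.
Import Order.TTheory GRing.Theory Num.Theory.
Set Implicit Arguments. Unset Strict Implicit. Unset Printing Implicit Defensive.
Local Open Scope ring_scope.

(* To a pair {x, y} of words attach the orthogonal projection
   P_xy = (x)_i Q_i on (R^3)^(x)n, where Q_i projects onto span(x_i, y_i)^⊥
   if x_i ⊥ y_i and onto x_i^⊥ otherwise; so tr Q_i is 1 resp. 2 and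
   tr P_xy = 2^A(x,y).  Trifference makes the
   P_xy of distinct pairs pairwise orthogonal: at a coordinate i where x_i, y_i
   and a word z of the other pair are an orthonormal frame, Q_i is the
   projection onto z_i, which the other pair's factor annihilates.  Hence
   sum P_xy is itself an orthogonal projection and its trace is at most 3^n. *)

Section TensorProductSeq.
Variables (R : comPzRingType) (m : nat) (I : eqType).

Fixpoint tens_dim (k : nat) : nat := if k is k'.+1 then (tens_dim k' * m)%N else 1%N.

Lemma tens_dimE k : tens_dim k = (m ^ k)%N.
Proof. by elim: k => //= k ->; rewrite expnS mulnC. Qed.

(* [tens_dim] rather than [m ^ size s] makes the dimension of
   [tensmx_seq F (a :: s)] reduce to that of [tensmx_seq F s *t F a]. *)
Fixpoint tensmx_seq (F : I -> 'M[R]_m) (s : seq I) : 'M[R]_(tens_dim (size s)) :=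
  match s return 'M[R]_(tens_dim (size s)) with
  | [::] => 1%:M
  | a :: s' => tensmx_seq F s' *t F a
  end.

Lemma mxtrace_tens p q (A : 'M[R]_p) (B : 'M[R]_q) : \tr (A *t B) = \tr A * \tr B.
Proof. by rewrite /mxtrace mulr_sum; apply: eq_bigr => k _; rewrite mxE. Qed.

Lemma eq_tensmx_seq F G s : F =1 G -> tensmx_seq F s = tensmx_seq G s.
Proof. by move=> eqFG; elim: s => //= a s ->; rewrite eqFG. Qed.

Lemma tensmx_seq_mul F G s :
  tensmx_seq F s *m tensmx_seq G s = tensmx_seq (fun a => F a *m G a) s.
Proof. by elim: s => [|a s IH] /=; rewrite ?mul1mx // tensmx_mul IH. Qed.

Lemma trmx_tensmx_seq F s : (tensmx_seq F s)^T = tensmx_seq (fun a => (F a)^T) s.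
Proof. by elim: s => [|a s IH] /=; rewrite ?trmx1 // trmx_tens IH. Qed.

Lemma mxtrace_tensmx_seq F s : \tr (tensmx_seq F s) = \prod_(a <- s) \tr (F a).
Proof.
elim: s => [|a s IH] /=; first by rewrite mxtrace1 big_nil.
by rewrite mxtrace_tens IH big_cons mulrC.
Qed.

Lemma tensmx_seq_eq0 F s a : a \in s -> F a = 0 -> tensmx_seq F s = 0.
Proof.
elim: s => [|b s IH] //=; rewrite inE => /predU1P [<- Fa0 | s_a Fa0].
  by rewrite Fa0 tensmx0.
by rewrite IH // tens0mx.
Qed.

End TensorProductSeq.

Lemma mxtrace_sym_idem_le (R : realFieldType) N (P : 'M[R]_N) :
  P^T = P -> P *m P = P -> \tr P <= N%:R.
Proof.
move=> symP idemP.
have diag_le1 i : P i i <= 1.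
  have Pii_sum : P i i = \sum_j P i j ^+ 2.
    rewrite -{1}idemP mxE; apply: eq_bigr => j _.
    by rewrite -{2}symP mxE expr2.
  have : P i i ^+ 2 <= P i i.
    rewrite [X in _ <= X]Pii_sum (bigD1 i) //= lerDl.
    by apply: sumr_ge0 => j _; apply: sqr_ge0.
  by rewrite expr2; nra.
rewrite /mxtrace -[N in N%:R]card_ord -sumr_const.
by apply: ler_sum => i _.
Qed.

Section FrameProjections.
Variable R : realType.
Implicit Types x y z : 'rV[R]_3.

Definition outer x : 'M[R]_3 := x^T *m x.

Lemma dot3C x y : dot3 x y = dot3 y x.
Proof. by rewrite /dot3; apply: eq_bigr => k _; rewrite mulrC. Qed.

Lemma mul_row_tr x y : x *m y^T = (dot3 x y)%:M.
Proof.
apply/matrixP => i j; rewrite (ord1 i) (ord1 j) !mxE /dot3 /=.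
by apply: eq_bigr => k _; rewrite !mxE.
Qed.

Lemma outer_mul x y : outer x *m outer y = dot3 x y *: (x^T *m y).
Proof. by rewrite /outer mulmxA -(mulmxA x^T) mul_row_tr mul_mx_scalar scalemxAl. Qed.

Lemma outer_mul_orth x y : dot3 x y = 0 -> outer x *m outer y = 0.
Proof. by move=> xy0; rewrite outer_mul xy0 scale0r. Qed.

Lemma outer_idem x : on_S2 x -> outer x *m outer x = outer x.
Proof. by move=> x1; rewrite outer_mul x1 scale1r. Qed.

Lemma trmx_outer x : (outer x)^T = outer x.
Proof. by rewrite /outer trmx_mul trmxK. Qed.

Lemma mxtrace_outer x : \tr (outer x) = dot3 x x.
Proof. by rewrite /outer mxtrace_mulC mul_row_tr /mxtrace big_ord1 mxE. Qed.

(* The rows x, y, z form an orthogonal matrix M, and M^T M = 1 is the claim. *)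
Lemma outer_frame x y z : on_S2 x -> on_S2 y -> on_S2 z -> mutually_orth x y z ->
  outer x + outer y + outer z = 1%:M.
Proof.
move=> x1 y1 z1 [xy0 [yz0 xz0]].
pose M : 'M[R]_(1 + (1 + 1), 3) := col_mx x (col_mx y z).
have scalar0 k : (0 : R)%:M = 0 :> 'M[R]_k.
  by apply/matrixP => i j; rewrite !mxE mul0rn.
have MMT : M *m M^T = 1%:M.
  rewrite /M !tr_col_mx !mul_col_row !mul_mx_row !mul_col_mx ?mul_mx_row !mul_row_tr.
  rewrite (dot3C y x) (dot3C z y) (dot3C z x) x1 y1 z1 xy0 yz0 xz0 !scalar0.
  by rewrite row_mx0 col_mx0 -!scalar_mx_block.
by rewrite -(mulmx1C MMT) /M !tr_col_mx !mul_row_col /outer addrA.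
Qed.

Definition pair_proj x y : 'M[R]_3 :=
  if dot3 x y == 0 then 1%:M - outer x - outer y else 1%:M - outer x.

Lemma trmx_pair_proj x y : (pair_proj x y)^T = pair_proj x y.
Proof. by rewrite /pair_proj; case: ifP => _; rewrite !raddfB /= trmx1 !trmx_outer. Qed.

Lemma pair_proj_idem x y : on_S2 x -> on_S2 y ->
  pair_proj x y *m pair_proj x y = pair_proj x y.
Proof.
move=> x1 y1; rewrite /pair_proj; case: ifP => [/eqP xy0|_];
  rewrite !mulmxBl !mulmxBr !mul1mx !mulmx1 !outer_idem //.
  have yx0 : dot3 y x = 0 by rewrite dot3C.
  by rewrite !outer_mul_orth // !subr0 !subrr !subr0.
by rewrite subrr subr0.
Qed.

Lemma mxtrace_pair_proj x y : on_S2 x -> on_S2 y ->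
  \tr (pair_proj x y) = if dot3 x y == 0 then 1 else 2.
Proof.
move=> x1 y1; rewrite /pair_proj.
by case: ifP => _; rewrite !raddfB /= mxtrace1 !mxtrace_outer x1 ?y1; lra.
Qed.

Lemma pair_proj_frame x y z : on_S2 x -> on_S2 y -> on_S2 z ->
  mutually_orth x y z -> pair_proj x y = outer z.
Proof.
move=> x1 y1 z1 orth; have := outer_frame x1 y1 z1 orth.
case: orth => /eqP xy0 _ frame.
rewrite /pair_proj xy0 -frame; apply/eqP; rewrite !subr_eq; apply/eqP.
by rewrite -addrA addrC (addrC (outer y)).
Qed.

Lemma outer_pair_projl x y : on_S2 x -> outer x *m pair_proj x y = 0.
Proof.
move=> x1; rewrite /pair_proj.
by case: ifP => [/eqP xy0|_];
  rewrite !mulmxBr mulmx1 outer_idem ?outer_mul_orth ?subr0 ?subrr.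
Qed.

Lemma outer_pair_projr x y : on_S2 y -> dot3 x y = 0 -> outer y *m pair_proj x y = 0.
Proof.
move=> y1 xy0; rewrite /pair_proj xy0 eqxx.
by rewrite !mulmxBr mulmx1 outer_idem // outer_mul_orth 1?dot3C // subr0 subrr.
Qed.

End FrameProjections.

Section TrifferentFamily.
Variables (R : realType) (n N : nat) (W : 'I_N -> word R n).
Hypothesis W_S2 : forall i a, on_S2 (W i a).
Hypothesis W_trifferent : forall i j k, i != j -> j != k -> i != k ->
  exists a, mutually_orth (W i a) (W j a) (W k a).

Definition code_pair_proj (p : 'I_N * 'I_N) :=
  tensmx_seq (fun a => pair_proj (W p.1 a) (W p.2 a)) (enum 'I_n).

Lemma mxtrace_code_pair_proj p :
  \tr (code_pair_proj p) = (2 ^ agree_cnt (W p.1) (W p.2))%:R.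
Proof.
rewrite mxtrace_tensmx_seq big_enum /=.
under eq_bigr do rewrite mxtrace_pair_proj //.
rewrite (bigID (fun a => dot3 (W p.1 a) (W p.2 a) == 0)) /=.
rewrite big1 => [|a /eqP ->]; last by rewrite eqxx.
rewrite mul1r (eq_bigr (fun _ => 2)) => [|a /negbTE ->] //.
rewrite prodr_const natrX /agree_cnt cardsE.
by congr (_ ^+ _); apply: eq_card => a; rewrite !inE.
Qed.

(* Some index t of q lies outside p; at a coordinate a where p.1, p.2, t are
   an orthonormal frame the factor of p is the projection onto W t a.  Choose
   t := q.1 if possible; otherwise q.1 lies in p, so W q.1 a ⊥ W q.2 a. *)
Lemma code_pair_proj_orth (p q : 'I_N * 'I_N) :
  (p.1 < p.2)%N -> (q.1 < q.2)%N -> p != q ->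
  code_pair_proj p *m code_pair_proj q = 0.
Proof.
case: p q => [i j] [k l] /= ij kl pq.
have i_neq_j : i != j by rewrite neq_ltn ij.
have factor0 t a : mutually_orth (W i a) (W j a) (W t a) ->
    outer (W t a) *m pair_proj (W k a) (W l a) = 0 ->
    code_pair_proj (i, j) *m code_pair_proj (k, l) = 0.
  move=> orth Pa0; rewrite tensmx_seq_mul (tensmx_seq_eq0 (a := a)) ?mem_enum //=.
  by rewrite (pair_proj_frame (W_S2 _ _) (W_S2 _ _) (W_S2 _ _) orth).
have [k_in_p | k_notin_p] := boolP ((i == k) || (j == k)).
  have /norP [il jl] : ~~ ((i == l) || (j == l)).
    apply/negP => /orP [] /eqP el; case/orP: k_in_p => /eqP ek;
      by move: kl ij pq; rewrite -el -ek ?eqxx //; lia.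
  have [a orth] := W_trifferent i_neq_j jl il.
  apply: (factor0 l a orth); apply: outer_pair_projr => //.
  by case: orth => [_ [jl0 il0]]; case/orP: k_in_p => /eqP <-.
have /norP [ik jk] := k_notin_p.
have [a orth] := W_trifferent i_neq_j jk ik.
exact: (factor0 k a orth (outer_pair_projl _ (W_S2 _ _))).
Qed.

Lemma trifferent_family_bound :
  \sum_(p : 'I_N * 'I_N | (p.1 < p.2)%N) ((2 ^ agree_cnt (W p.1) (W p.2))%:R : R)
    <= (3 ^ n)%:R.
Proof.
pose S := \sum_(p : 'I_N * 'I_N | (p.1 < p.2)%N) code_pair_proj p.
have symS : S^T = S.
  rewrite raddf_sum; apply: eq_bigr => p _.
  by rewrite /= trmx_tensmx_seq; apply: eq_tensmx_seq => a; rewrite trmx_pair_proj.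
have idemS : S *m S = S.
  rewrite mulmx_suml; apply: eq_bigr => p p12.
  rewrite mulmx_sumr (bigD1 p) //= big1 ?addr0 => [|q /andP [q12 qp]].
    by rewrite tensmx_seq_mul; apply: eq_tensmx_seq => a; rewrite pair_proj_idem.
  by apply: code_pair_proj_orth; rewrite // eq_sym.
have := mxtrace_sym_idem_le symS idemS.
rewrite raddf_sum /=; under eq_bigr do rewrite mxtrace_code_pair_proj.
by rewrite size_enum_ord tens_dimE.
Qed.

End TrifferentFamily.

Theorem mainTheorem7 (R : realType) (n : nat) (C : seq (word R n)) :
  vector_trifferent C -> (2 <= size C)%N ->
  (\sum_(i < size C) \sum_(j < size C | (i < j)%N)
      2 ^ agree_cnt (nth 0%R C i) (nth 0%R C j) <= 3 ^ n)%N.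
Proof.
move=> [uniqC [C_S2 C_trifferent]] _.
pose W (i : 'I_(size C)) := nth 0%R C i.
have W_S2 i a : on_S2 (W i a) by apply/C_S2/mem_nth.
have W_trifferent i j k : i != j -> j != k -> i != k ->
    exists a, mutually_orth (W i a) (W j a) (W k a).
  by move=> ij jk ik; apply: C_trifferent; rewrite ?mem_nth ?nth_uniq.
have := trifferent_family_bound W_S2 W_trifferent.
by rewrite pair_big_dep /= -(ler_nat R) natr_sum.
Qed.
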